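(* Let $p$ be a prime, let $j\not\equiv 0,1 \pmod p$, and let $m\geq 2$ be an integer dividing $p-1$. Suppose $a,b,c\in\mathrm{GF}(p)$ satisfy \[ (1-j)a^m+jb^m\equiv c^m \pmod p, \] where $a^m,b^m,c^m$ are non-zero and pairwise distinct modulo $p$. Let $\alpha\not\equiv 0$ and $\gamma$ be constants modulo $p$. Form a new first row from the first row of $B_{p,j}$ (whose entry in column $i$ is $ij \bmod p$) as follows: every symbol of the form $\alpha\beta^m+\gamma$ with $\beta\not\equiv 0$ (i.e. every symbol $s$ such that $(s-\gamma)/\alpha$ is a non-zero $m$th power mod $p$) is replaced by the symbol $\alpha(b/c)^m\beta^m+\gamma$; all other symbols are left unchanged. Then this new first row generates a diagonally cyclic latin square of order $p$.
   Context: Rows, columns and symbols of squares of order $n$ are indexed by $\{0,1,\dots,n-1\}$ and computed modulo $n$. A latin square with operation $\circ$ (symbol $i\circ j$ in cell $(i,j)$) of odd order $n$ is diagonally cyclic if $i\circ j=k$ implies $(i+1)\circ(j+1)=k+1$ for all cells. A first row $(r_0,\dots,r_{n-1})$ ''generates'' the $n\times n$ array whose cell $(i,k)$ contains $r_{k-i}+i \pmod n$; it generates a diagonally cyclic latin square precisely when this array is a latin square. For $j$ coprime to odd $n$ with $j\neq 1$, $B_{n,j}$ is the diagonally cyclic latin square generated by the first row with $0\circ i = ij \pmod n$. *)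

From HB Require Import structures.
From mathcomp Require Import all_boot all_order all_algebra.
Set Implicit Arguments. Unset Strict Implicit. Unset Printing Implicit Defensive.
Import GRing.Theory.
Local Open Scope ring_scope.

Definition latin_square (T : finType) (L : T -> T -> T) : Prop :=
  (forall i, injective (L i)) /\ (forall k, injective (fun i => L i k)).

Definition gen_array (R : zmodType) (r : R -> R) : R -> R -> R :=
  fun i k => r (k - i) + i.

Definition generates_dcls (R : finZmodType) (r : R -> R) : Prop :=
  latin_square (gen_array r).

Definition B_row (p : nat) (j : 'F_p) : 'F_p -> 'F_p := fun i => i * j.

(* The modified first row: a symbol s of the form alpha*beta^m + gamma with
   beta <> 0 is replaced by alpha*(b/c)^m*beta^m + gamma (beta^m = (s-gamma)/alpha);
   other symbols are unchanged. *)
Definition new_row (p : nat) (j alpha gamma b c : 'F_p) (m : nat) : 'F_p -> 'F_p :=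
  fun i =>
    let s := B_row j i in
    if [exists beta : 'F_p, (beta != 0) && (s == alpha * beta ^+ m + gamma)]
    then alpha * (b / c) ^+ m * ((s - gamma) / alpha) + gamma
    else s.

From HB Require Import structures.
From mathcomp Require Import all_boot all_order all_algebra.
Set Implicit Arguments. Unset Strict Implicit. Unset Printing Implicit Defensive.
Import GRing.Theory.
Local Open Scope ring_scope.

(* A first row r over a finite abelian group generates a diagonally cyclic
   latin square as soon as r is an orthomorphism: r and i |-> r i - i are both
   injective (rows of the array are translates of r, columns translates of
   i |-> r i - i).
   In the coordinate t = (i*j - gamma)/alpha the new row reads
   r i = alpha * g t + gamma, where g = scale_on P mu multiplies by
   mu = (b/c)^m the t in P (the non-zero m-th powers) and fixes the others.
   Multiplication by a non-zero m-th power preserves P, so such a partial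
   scaling is injective, hence so is r.  For the columns, the hypothesis
   (1-j)a^m + j b^m = c^m gives j*mu - 1 = (j-1)*k with k = (a/c)^m, whence
   j * g t - t = (j-1) * scale_on P k t; thus j * (r i - i) is again an
   injective function of i. *)

Definition scale_on (R : pzRingType) (P : pred R) (u : R) (t : R) : R :=
  if P t then u * t else t.

Definition nonzero_mth_power (F : finFieldType) (m : nat) : pred F :=
  fun t => [exists beta : F, (beta != 0) && (t == beta ^+ m)].

(* Rows of the generated array are translates of r, columns translates of
   i |-> r i - i: an orthomorphism generates a diagonally cyclic latin
   square. *)
Lemma orthomorphism_generates_dcls (R : finZmodType) (r : R -> R) :
  injective r -> injective (fun i => r i - i) -> generates_dcls r.
Proof.
move=> r_inj rsub_inj; split=> [i x y | k x y]; rewrite /gen_array.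
  by move=> /addIr /r_inj /addIr.
move=> eq_xy; have : r (k - x) - (k - x) = r (k - y) - (k - y).
  by rewrite !opprB !addrA eq_xy.
by move=> /rsub_inj /addrI /oppr_inj.
Qed.

Section ScaleOn.
Variables (R : idomainType) (P : pred R).

(* Scaling the P-part by a non-zero u that preserves P is injective: the two
   parts P and ~~ P are both mapped into themselves. *)
Lemma scale_on_inj (u : R) :
  u != 0 -> (forall t, P (u * t) = P t) -> injective (scale_on P u).
Proof.
move=> u_nz Pu t1 t2; rewrite /scale_on.
case P1: (P t1); case P2: (P t2) => // eq12.
- exact: mulfI eq12.
- by move: P2; rewrite -eq12 Pu P1.
- by move: P1; rewrite eq12 Pu P2.
Qed.

Lemma scale_on_shear (j mu k t : R) :
  j * mu - 1 = (j - 1) * k ->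
  j * scale_on P mu t - t = (j - 1) * scale_on P k t.
Proof.
move=> eq_muk; rewrite /scale_on; case: (P t).
  by rewrite !mulrA -eq_muk mulrBl mul1r.
by rewrite mulrBl mul1r.
Qed.

End ScaleOn.

Lemma affine_relation_ratio (F : fieldType) (j A B C : F) :
  C != 0 -> (1 - j) * A + j * B = C -> j * (B / C) - 1 = (j - 1) * (A / C).
Proof.
move=> C_nz eqC; have eqA : (1 - j) * A = C - j * B by rewrite -eqC addrK.
by rewrite -[j - 1]opprB mulNr !mulrA eqA mulrBl divff // opprB.
Qed.

Section MthPowers.
Variables (F : finFieldType) (m : nat).

Lemma nonzero_mth_powerMl (v t : F) :
  v != 0 -> nonzero_mth_power m (v ^+ m * t) = nonzero_mth_power m t.
Proof.
move=> v_nz; apply/existsP/existsP => -[beta /andP [beta_nz /eqP eq_t]].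
  exists (beta / v); rewrite mulf_neq0 ?invr_eq0 //= expr_div_n -eq_t.
  by rewrite mulrC mulKf ?expf_neq0.
by exists (v * beta); rewrite mulf_neq0 //= exprMn eq_t.
Qed.

Lemma affine_mth_power (alpha gamma s : F) : alpha != 0 ->
  [exists beta : F, (beta != 0) && (s == alpha * beta ^+ m + gamma)]
  = nonzero_mth_power m ((s - gamma) / alpha).
Proof.
move=> alpha_nz; apply: eq_existsb => beta; congr (_ && _).
by rewrite -subr_eq -[in RHS](inj_eq (mulIf alpha_nz)) divfK // mulrC.
Qed.

End MthPowers.

Section ScaledRow.
Variables (F : fieldType) (P : pred F) (j alpha gamma mu k : F).
Hypotheses (j_nz : j != 0) (j1 : j != 1) (alpha_nz : alpha != 0).
Hypotheses (mu_nz : mu != 0) (k_nz : k != 0).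
Hypotheses (P_mu : forall t, P (mu * t) = P t).
Hypotheses (P_k : forall t, P (k * t) = P t).
Hypothesis eq_muk : j * mu - 1 = (j - 1) * k.

(* The affine coordinate t = (i*j - gamma)/alpha in which the symbol i*j of
   B_(p,j) reads alpha * t + gamma. *)
Definition chart (i : F) : F := (i * j - gamma) / alpha.

Definition scaled_row (i : F) : F := alpha * scale_on P mu (chart i) + gamma.

Lemma chart_inj : injective chart.
Proof. by move=> x y /(mulIf (invr_neq0 alpha_nz)) /addIr /(mulIf j_nz). Qed.

Lemma chartK (i : F) : i * j = alpha * chart i + gamma.
Proof. by rewrite [alpha * _]mulrC divfK ?subrK. Qed.

Lemma scaled_row_inj : injective scaled_row.
Proof.
move=> x y /addIr /(mulfI alpha_nz).
by move=> /(scale_on_inj mu_nz P_mu) /chart_inj.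
Qed.

Lemma scaled_row_shear (i : F) : j * (scaled_row i - i)
  = alpha * ((j - 1) * scale_on P k (chart i)) + (j - 1) * gamma.
Proof.
rewrite mulrBr [j * i]mulrC chartK -(scale_on_shear _ _ eq_muk) mulrDr.
by rewrite mulrCA opprD addrACA -mulrBr mulrBl mul1r.
Qed.

Lemma scaled_row_sub_inj : injective (fun i => scaled_row i - i).
Proof.
have j1_nz : j - 1 != 0 by rewrite subr_eq0.
move=> x y /(congr1 (fun z => j * z)) /=; rewrite !scaled_row_shear.
move=> /addIr /(mulfI alpha_nz) /(mulfI j1_nz).
by move=> /(scale_on_inj k_nz P_k) /chart_inj.
Qed.

End ScaledRow.

Lemma new_rowE (p : nat) (j alpha gamma b c : 'F_p) (m : nat) :
  alpha != 0 ->
  new_row j alpha gamma b c m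
  =1 scaled_row (nonzero_mth_power m) j alpha gamma ((b / c) ^+ m).
Proof.
move=> alpha_nz i; rewrite /new_row /scaled_row /chart /scale_on.
rewrite affine_mth_power //; case: ifP => _; first by rewrite !mulrA.
by rewrite mulrCA mulfV // mulr1 subrK.
Qed.

Theorem theorem3 (p : nat) (j : 'F_p) (m : nat) (a b c alpha gamma : 'F_p) :
  prime p ->
  j != 0 -> j != 1 ->
  (2 <= m)%N -> (m %| p.-1)%N ->
  (1 - j) * a ^+ m + j * b ^+ m = c ^+ m ->
  a ^+ m != 0 -> b ^+ m != 0 -> c ^+ m != 0 ->
  a ^+ m != b ^+ m -> a ^+ m != c ^+ m -> b ^+ m != c ^+ m ->
  alpha != 0 ->
  generates_dcls (new_row j alpha gamma b c m).
Proof.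
move=> _ j_nz j1 m_ge2 _ eq_abc am_nz bm_nz cm_nz _ _ _ alpha_nz.
have base_nz (x : 'F_p) : x ^+ m != 0 -> x != 0.
  by apply: contraNneq => ->; rewrite expr0n; case: (m) m_ge2.
have ratio_nz x : x ^+ m != 0 -> x / c != 0.
  by move=> /base_nz x_nz; rewrite mulf_neq0 ?invr_eq0 ?(base_nz _ cm_nz).
pose P : pred 'F_p := nonzero_mth_power m.
have P_ratio x : x ^+ m != 0 -> forall t, P ((x / c) ^+ m * t) = P t.
  by move=> /ratio_nz xc_nz t; apply: nonzero_mth_powerMl.
have eq_muk : j * (b / c) ^+ m - 1 = (j - 1) * (a / c) ^+ m.
  by rewrite !expr_div_n (affine_relation_ratio cm_nz eq_abc).
have [mu_nz k_nz] : (b / c) ^+ m != 0 /\ (a / c) ^+ m != 0.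
  by split; apply: expf_neq0; apply: ratio_nz.
have row_eq := fsym (@new_rowE p j alpha gamma b c m alpha_nz).
apply: orthomorphism_generates_dcls.
  exact: eq_inj (scaled_row_inj j_nz alpha_nz mu_nz (P_ratio b bm_nz)) row_eq.
apply: eq_inj
  (scaled_row_sub_inj j_nz j1 alpha_nz k_nz (P_ratio a am_nz) eq_muk) _.
by move=> i; congr (_ - _); apply: row_eq.
Qed.
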